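(* Let $G$ be a finite group and let $\alpha_1,\alpha_2\colon G\to\mathbf{GL}_n(k)$ be injective homomorphisms. Then there exists $\varphi\in\mathrm{Cr}_{2n}$ such that $\alpha_1=\mathrm{Int}(\varphi)\circ\alpha_2$, where $\mathrm{Int}(\varphi)$ denotes conjugation by $\varphi$.
   Context: $k$ is an algebraically closed field of characteristic zero. $\mathrm{Cr}_m$ is the Cremona group of rank $m$, i.e., the group of birational self-maps of $\mathbf{A}^m$. $\mathbf{GL}_n(k)$ is identified with the subgroup of $\mathrm{Cr}_n$ of linear transformations of $\mathbf{A}^n$, and $\mathrm{Cr}_n$ is identified with a subgroup of $\mathrm{Cr}_{2n}$ via the standard embedding (acting on the first $n$ coordinates of $\mathbf{A}^{2n}=\mathbf{A}^n\times\mathbf{A}^n$ and trivially on the last $n$). *)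

From HB Require Import structures.
From mathcomp Require Import all_boot all_order all_algebra all_fingroup.
From mathcomp Require Import fraction generic_quotient.
From mathcomp Require Import mpoly.
Set Implicit Arguments. Unset Strict Implicit. Unset Printing Implicit Defensive.
Import GRing.Theory.
Local Open Scope ring_scope.

Definition ratfun (k : fieldType) (m : nat) := {fraction {mpoly k[m]}}.

Section Cremona.
Variables (k : fieldType) (m : nat).
Local Notation K := (ratfun k m).

Definition ratX (i : 'I_m) : K := tofrac ('X_i : {mpoly k[m]}).
Definition ratC (c : k) : K := tofrac (c%:MP : {mpoly k[m]}).

(* chosen numerator and denominator of a rational function (denominator != 0) *)
Definition ratnum (f : K) : {mpoly k[m]} := (frac (repr f)).1.
Definition ratden (f : K) : {mpoly k[m]} := (frac (repr f)).2.

Definition ratmap := 'I_m -> K.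

Definition peval (h : ratmap) (p : {mpoly k[m]}) : K := mmap ratC h p.

(* f o h  is well defined: the denominator of f does not vanish along h *)
Definition admissible (h : ratmap) (f : K) : Prop := peval h (ratden f) != 0.

Definition rsubst (h : ratmap) (f : K) : K := peval h (ratnum f) / peval h (ratden f).

Definition rcomp (phi psi : ratmap) : ratmap := fun i => rsubst psi (phi i).
Definition rcomp_defined (phi psi : ratmap) : Prop := forall i, admissible psi (phi i).

Definition ratid : ratmap := ratX.

Definition birational_inverse (phi psi : ratmap) : Prop :=
  [/\ rcomp_defined phi psi, rcomp_defined psi phi,
      rcomp phi psi = ratid & rcomp psi phi = ratid].

Definition cremona (phi : ratmap) : Prop := exists psi, birational_inverse phi psi.

End Cremona.

(* The linear map x |-> A x of A^n, seen in Cr_{2n} through the standard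
   embedding Cr_n -> Cr_{2n} acting on the first n coordinates of
   A^{2n} = A^n x A^n and trivially on the last n. *)
Definition lin_cremona (k : fieldType) (n : nat) (A : 'M[k]_n) : ratmap k (n + n) :=
  fun i => match split i with
           | inl i' => \sum_(j < n) @ratC k (n + n) (A i' j) * @ratX k (n + n) (lshift n j)
           | inr _ => @ratX k (n + n) i
           end.

From HB Require Import structures.
From mathcomp Require Import all_boot all_order all_algebra all_fingroup.
From mathcomp Require Import fraction generic_quotient mpoly ring.
From Stdlib Require Import FunctionalExtensionality.
Import GRing.Theory.
Local Open Scope ring_scope.
Set Implicit Arguments. Unset Strict Implicit.

(* No-name lemma.  Choose a polynomial matrix A(x), invertible over k(x), with
   A(a1(g) x) = a2(g) A(x) for all g: average c(a1(h) x) a2(h)^-1 over G, where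
   c is 1 at a point x0 with trivial stabiliser and vanishes on the rest of its
   orbit, so that A(x0) = 1.  The map Phi_A (x, y) = (x, A(x) y) is birational
   on A^n x A^n and Phi_A o (a1(g) (+) 1) = (a1(g) (+) a2(g)) o Phi_A.  With B
   built likewise for (a2, a1) and the swap S (x, y) = (y, x),
   phi = Phi_A^-1 o S o Phi_B conjugates a2(g) (+) 1 into a1(g) (+) 1.
   Composition of rational maps is substitution, a field endomorphism of the
   function field as soon as the substituted coordinates are algebraically
   independent; for Phi_A this follows from the Jacobian criterion, which is
   where characteristic 0 is used. *)

(** * Substitution into rational functions *)

Lemma numden_fracE (R : idomainType) (x : {fraction R}) :
  x = tofrac (frac (repr x)).1 / tofrac (frac (repr x)).2.
Proof.
rewrite -{1}[x]reprK; unlock tofrac.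
rewrite -[_ / _]/(FracField.mul _ (FracField.inv _)).
rewrite -FracField.pi_inv -FracField.pi_mul; apply/eqmodP => /=.
rewrite FracField.equivfE /FracField.mulf /FracField.invf.
by rewrite !numden_Ratio ?mulr1 ?mul1r ?mulf_neq0 ?oner_eq0 ?denom_ratioP // mulrC.
Qed.

Lemma rmorph_mmap n (R S T : comNzRingType) (f : {rmorphism R -> S})
    (g : {rmorphism S -> T}) (h : 'I_n -> S) p :
  g (mmap f h p) = mmap (g \o f) (g \o h) p.
Proof.
rewrite /mmap rmorph_sum; apply: eq_bigr => mm _.
rewrite rmorphM /mmap1 rmorph_prod; congr (_ * _).
by apply: eq_bigr => i _; rewrite rmorphXn.
Qed.

Lemma eq_mmap n (R S : nzRingType) (f1 f2 : R -> S) (h1 h2 : 'I_n -> S) p :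
  f1 =1 f2 -> h1 =1 h2 -> mmap f1 h1 p = mmap f2 h2 p.
Proof.
move=> ef eh; rewrite /mmap /mmap1; apply: eq_bigr => mm _; rewrite ef.
by congr (_ * _); apply: eq_bigr => i _; rewrite eh.
Qed.

Lemma mmap_mpolyC_X n (R : comNzRingType) (p : {mpoly R[n]}) :
  mmap (@mpolyC n R) (fun i => 'X_i) p = p.
Proof.
rewrite {2}[p]mpolyE /mmap; apply: eq_bigr => mm _.
by rewrite mmap1_id mul_mpolyC.
Qed.

Lemma subf_div (F : fieldType) (x1 y1 x2 y2 : F) : y1 != 0 -> y2 != 0 ->
  x1 / y1 - x2 / y2 = (x1 * y2 - x2 * y1) / (y1 * y2).
Proof. by move=> y1_neq0 y2_neq0; field; rewrite y1_neq0 y2_neq0. Qed.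

Section Substitution.
Variables (k : fieldType) (m : nat).
Local Notation K := (ratfun k m).
Local Notation P := {mpoly k[m]}.
Implicit Types (h : ratmap k m) (p q : P) (f : K).

Lemma ratC_is_zmod : zmod_morphism (@ratC k m).
Proof. by move=> a b; rewrite /ratC mpolyCB rmorphB. Qed.
HB.instance Definition _ := GRing.isZmodMorphism.Build k K (@ratC k m) ratC_is_zmod.
Lemma ratC_is_monoid : monoid_morphism (@ratC k m).
Proof.
by split=> [|a b]; rewrite /ratC ?mpolyC1 ?rmorph1 // mpolyCM rmorphM.
Qed.
HB.instance Definition _ := GRing.isMonoidMorphism.Build k K (@ratC k m) ratC_is_monoid.

Lemma peval_is_zmod h : zmod_morphism (peval h).
Proof. by move=> a b; rewrite /peval raddfB. Qed.
HB.instance Definition _ h :=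
  GRing.isZmodMorphism.Build P K (peval h) (peval_is_zmod h).
Lemma peval_is_monoid h : monoid_morphism (peval h).
Proof. by split=> [|a b]; rewrite /peval ?rmorph1 // rmorphM. Qed.
HB.instance Definition _ h :=
  GRing.isMonoidMorphism.Build P K (peval h) (peval_is_monoid h).

Lemma pevalC h c : peval h c%:MP = ratC m c.
Proof. exact: mmapC. Qed.
Lemma pevalX h i : peval h 'X_i = h i.
Proof. by rewrite /peval mmapX mmap1U. Qed.

Lemma peval_ratX p : peval (@ratX k m) p = tofrac p.
Proof. by rewrite -{2}[p]mmap_mpolyC_X rmorph_mmap; apply: eq_mmap. Qed.

(* This makes [rsubst h] a field endomorphism of [K]: no denominator vanishes. *)
Definition alg_indep h := forall p, peval h p = 0 -> p = 0.

Lemma alg_indep_ratX : alg_indep (@ratX k m).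
Proof. by move=> p; rewrite peval_ratX => /eqP; rewrite tofrac_eq0 => /eqP. Qed.

Lemma ratden_neq0 f : ratden f != 0.
Proof. exact: denom_ratioP. Qed.

Lemma ratfun_numdenE f : f = tofrac (ratnum f) / tofrac (ratden f).
Proof. exact: numden_fracE. Qed.

Lemma ratfun_fracE f : exists a b : P, b != 0 /\ f = tofrac a / tofrac b.
Proof.
by exists (ratnum f), (ratden f); split; [apply: ratden_neq0 | apply: ratfun_numdenE].
Qed.

Section AlgIndep.
Variables (h : ratmap k m) (hI : alg_indep h).

Lemma peval_neq0 p : p != 0 -> peval h p != 0.
Proof. by apply: contra => /eqP /hI ->. Qed.

Lemma admissible_alg_indep f : admissible h f.
Proof. exact/peval_neq0/ratden_neq0. Qed.

Lemma rsubst_frac p q : q != 0 -> rsubst h (tofrac p / tofrac q) = peval h p / peval h q.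
Proof.
move=> q0; rewrite /rsubst; have := ratfun_numdenE (tofrac p / tofrac q).
have := ratden_neq0 (tofrac p / tofrac q); move: (ratnum _) (ratden _) => a b b0 e.
have /(congr1 (peval h)) : a * q = p * b.
  by apply/eqP; rewrite -tofrac_eq !tofracM -eqr_div ?tofrac_eq0 // -e.
by rewrite !rmorphM => e'; apply/eqP; rewrite eqr_div ?peval_neq0 // e'.
Qed.

Lemma rsubst_tofrac p : rsubst h (tofrac p) = peval h p.
Proof. by rewrite -[tofrac p]divr1 -tofrac1 rsubst_frac ?oner_eq0 // rmorph1 divr1. Qed.

Lemma rsubstC c : rsubst h (ratC m c) = ratC m c.
Proof. by rewrite /ratC rsubst_tofrac pevalC. Qed.

Lemma rsubstX i : rsubst h (ratX k i) = h i.
Proof. by rewrite /ratX rsubst_tofrac pevalX. Qed.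

Lemma rsubst_is_zmod : zmod_morphism (rsubst h).
Proof.
move=> f g; have [a [b [b0 ->]]] := ratfun_fracE f.
have [c [d [d0 ->]]] := ratfun_fracE g.
have [tb td] : tofrac b != 0 /\ tofrac d != 0 by rewrite !tofrac_eq0.
have [pb pd] := (peval_neq0 b0, peval_neq0 d0).
rewrite (subf_div _ _ tb td) -!tofracM -tofracB !rsubst_frac ?mulf_neq0 //.
by rewrite rmorphB !rmorphM (subf_div _ _ pb pd).
Qed.

Lemma rsubst_is_monoid : monoid_morphism (rsubst h).
Proof.
split=> [|f g]; first by rewrite -tofrac1 rsubst_tofrac rmorph1.
have [a [b [b0 ->]]] := ratfun_fracE f; have [c [d [d0 ->]]] := ratfun_fracE g.
rewrite mulf_div -!tofracM !rsubst_frac ?mulf_neq0 //.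
by rewrite !rmorphM mulf_div.
Qed.

End AlgIndep.

(* A copy of [rsubst h] carrying the ring morphism structure, which needs [hI]. *)
Definition rsubstm h (hI : alg_indep h) : K -> K := rsubst h.
HB.instance Definition _ h hI :=
  GRing.isZmodMorphism.Build K K (@rsubstm h hI) (rsubst_is_zmod hI).
HB.instance Definition _ h hI :=
  GRing.isMonoidMorphism.Build K K (@rsubstm h hI) (rsubst_is_monoid hI).

Lemma rsubst_ratX f : rsubst (@ratX k m) f = f.
Proof.
have [a [b [b0 ->]]] := ratfun_fracE f.
by rewrite rsubst_frac ?peval_ratX //; apply: alg_indep_ratX.
Qed.

Lemma peval_rcomp (a b : ratmap k m) (bI : alg_indep b) p :
  peval (rcomp a b) p = rsubst b (peval a p).
Proof.
rewrite -[rsubst b _]/(rsubstm bI _) /peval rmorph_mmap; apply: eq_mmap => // c.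
by rewrite /= /rsubstm rsubstC.
Qed.

Lemma alg_indep_rcomp (a b : ratmap k m) :
  alg_indep a -> alg_indep b -> alg_indep (rcomp a b).
Proof.
move=> aI bI p; rewrite (peval_rcomp _ bI) => e; apply: aI.
by apply/eqP; rewrite -(fmorph_eq0 (rsubstm bI)); apply/eqP.
Qed.

Lemma alg_indep_rcomp_id (a b : ratmap k m) :
  alg_indep b -> rcomp a b = @ratX k m -> alg_indep a.
Proof.
move=> bI ab p /(congr1 (rsubst b)).
rewrite -(peval_rcomp _ bI) ab peval_ratX -[rsubst b 0]/(rsubstm bI 0) rmorph0.
by move=> /eqP; rewrite tofrac_eq0 => /eqP.
Qed.

Lemma rsubst_rcomp (a b : ratmap k m) (aI : alg_indep a) (bI : alg_indep b) f :
  rsubst b (rsubst a f) = rsubst (rcomp a b) f.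
Proof.
have [x [y [y0 ->]]] := ratfun_fracE f.
rewrite (rsubst_frac (alg_indep_rcomp aI bI)) // (rsubst_frac aI) //.
by rewrite !(peval_rcomp _ bI); apply: (fmorph_div (rsubstm bI)).
Qed.

Lemma rcompA (a b c : ratmap k m) : alg_indep b -> alg_indep c ->
  rcomp (rcomp a b) c = rcomp a (rcomp b c).
Proof.
move=> bI cI; apply: functional_extensionality => i.
by rewrite /rcomp -/(rcomp b c) rsubst_rcomp.
Qed.

Lemma ratX_rcomp (b : ratmap k m) : alg_indep b -> rcomp (@ratX k m) b = b.
Proof. by move=> bI; apply: functional_extensionality => i; rewrite /rcomp rsubstX. Qed.

Lemma rcomp_ratX (a : ratmap k m) : rcomp a (@ratX k m) = a.
Proof. by apply: functional_extensionality => i; rewrite /rcomp rsubst_ratX. Qed.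

Lemma rcomp_sandwich (f1 g1 f2 g2 a1 a2 a3 : ratmap k m) :
  alg_indep f2 -> alg_indep a3 -> alg_indep g1 -> alg_indep g2 ->
  rcomp f1 (rcomp a2 g1) = a1 -> rcomp f2 (rcomp a3 g2) = a2 ->
  rcomp (rcomp f1 f2) (rcomp a3 (rcomp g2 g1)) = a1.
Proof.
move=> f2I a3I g1I g2I <- <-.
rewrite (rcompA _ f2I (alg_indep_rcomp a3I (alg_indep_rcomp g2I g1I))).
by rewrite (rcompA _ (alg_indep_rcomp a3I g2I) g1I) (rcompA _ g2I g1I).
Qed.

End Substitution.

(** * Polynomial substitution and the Jacobian criterion *)

Lemma mderivXU (R : comNzRingType) m (i j : 'I_m) :
  ('X_i : {mpoly R[m]})^`M(j) = (i == j)%:R.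
Proof.
rewrite mderivX mnm1E; case: eqP => [->|_]; last by rewrite scale0r.
suff -> : (U_(j) - U_(j) = 0)%MM by rewrite mpolyX0 scale1r.
by apply/mnmP => x; rewrite mnmBE subnn mnm0E.
Qed.

Section PolySubst.
Variables (R : comNzRingType) (m1 m2 : nat) (H : 'I_m1 -> {mpoly R[m2]}).

Definition msubst (p : {mpoly R[m1]}) : {mpoly R[m2]} := mmap (@mpolyC m2 R) H p.

Lemma msubst_is_zmod : zmod_morphism msubst.
Proof. by move=> a b; rewrite /msubst raddfB. Qed.
HB.instance Definition _ :=
  GRing.isZmodMorphism.Build {mpoly R[m1]} {mpoly R[m2]} msubst msubst_is_zmod.
Lemma msubst_is_monoid : monoid_morphism msubst.
Proof. by split=> [|a b]; rewrite /msubst ?rmorph1 // rmorphM. Qed.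
HB.instance Definition _ :=
  GRing.isMonoidMorphism.Build {mpoly R[m1]} {mpoly R[m2]} msubst msubst_is_monoid.

Lemma msubstC c : msubst c%:MP = c%:MP. Proof. exact: mmapC. Qed.
Lemma msubstX i : msubst 'X_i = H i. Proof. by rewrite /msubst mmapX mmap1U. Qed.

Let chain_rule p := forall j, (msubst p)^`M(j) = \sum_i msubst (p^`M(i)) * (H i)^`M(j).

Let chain_ruleD p q : chain_rule p -> chain_rule q -> chain_rule (p + q).
Proof.
move=> dp dq j; rewrite rmorphD mderivD dp dq -big_split /=.
by apply: eq_bigr => i _; rewrite mderivD rmorphD mulrDl.
Qed.

Let chain_ruleM p q : chain_rule p -> chain_rule q -> chain_rule (p * q).
Proof.
move=> dp dq j; rewrite rmorphM mderivM dp dq mulr_suml mulr_sumr -big_split /=.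
by apply: eq_bigr => i _; rewrite mderivM rmorphD !rmorphM; ring.
Qed.

Let chain_ruleC c : chain_rule c%:MP.
Proof.
by move=> j; rewrite msubstC mderivC big1 // => i _; rewrite mderivC rmorph0 mul0r.
Qed.

Let chain_ruleX l : chain_rule 'X_l.
Proof.
move=> j; rewrite msubstX (bigD1 l) //= mderivXU eqxx rmorph1 mul1r big1 ?addr0 //.
by move=> i; rewrite eq_sym => /negbTE li; rewrite mderivXU li rmorph0 mul0r.
Qed.

Lemma mderiv_msubst p j :
  (msubst p)^`M(j) = \sum_i msubst (p^`M(i)) * (H i)^`M(j).
Proof.
move: j; suff: chain_rule p by [].
rewrite [p]mpolyE; elim/big_rec: _ => [|mm q _ dq]; first by rewrite -mpolyC0.
rewrite -mul_mpolyC mpolyXE_id; apply/chain_ruleD/dq/chain_ruleM => //.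
apply: (big_ind chain_rule); [by rewrite -mpolyC1 | exact: chain_ruleM |] => i _.
elim: (mm i) => [|e ih]; first by rewrite expr0 -mpolyC1.
by rewrite exprS; apply: chain_ruleM (chain_ruleX i) ih.
Qed.

End PolySubst.

Lemma msubst_comp (R : comNzRingType) m1 m2 m3 (H : 'I_m2 -> {mpoly R[m3]})
    (G : 'I_m1 -> {mpoly R[m2]}) p :
  msubst H (msubst G p) = msubst (msubst H \o G) p.
Proof.
by rewrite [msubst G p]/msubst rmorph_mmap; apply: eq_mmap => // c /=; apply: mmapC.
Qed.

Section Jacobian.
Variables (k : fieldType) (m : nat) (hk : [pchar k] =i pred0).
Local Notation P := {mpoly k[m]}.

Definition jacobian (H : 'I_m -> P) : 'M[P]_m := \matrix_(i, j) (H i)^`M(j).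

Lemma msize_mderiv (p : P) i : (msize (p^`M(i)) <= (msize p).-1)%N.
Proof.
rewrite [msize (p^`M(i))]msizeE; apply/bigmax_leqP_seq => mm hm _.
rewrite mcoeff_msupp mcoeff_mderiv in hm.
have : (mm + U_(i))%MM \in msupp p.
  by rewrite mcoeff_msupp; apply: contraNneq hm => ->; rewrite mul0rn.
move/msize_mdeg_lt; rewrite mdegD mdeg1 addn1.
by case: (msize p) => // s; rewrite ltnS.
Qed.

Lemma mderiv_eq0_const (p : P) : (forall i, p^`M(i) = 0) -> p = (p@_0)%:MP.
Proof.
move=> dp0; apply/mpolyP => mm; rewrite mcoeffC.
have [->|nz] := eqVneq mm 0%MM; first by rewrite mulr1.
rewrite mulr0; have [i hi] : exists i, mm i != 0%N.
  apply/existsP; apply: contraNT nz; rewrite negb_exists => /forallP mm0.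
  by apply/eqP/mnmP => x; rewrite mnm0E; apply/eqP; rewrite -[_ == _]negbK mm0.
have := mcoeff_mderiv i p (mm - U_(i))%MM; rewrite dp0 mcoeff0 submK ?lep1mP //.
by move/esym/eqP; rewrite -mulr_natr mulf_eq0 (pcharf0P _).1 // orbF => /eqP.
Qed.

Lemma msubst_inj_jacobian (H : 'I_m -> P) :
  \det (jacobian H) != 0 -> forall p, msubst H p = 0 -> p = 0.
Proof.
move=> dJ; suff: forall s (p : P), (msize p <= s)%N -> msubst H p = 0 -> p = 0.
  by move=> hs p; apply: hs (leqnn _).
have const_eq0 (p : P) : p = (p@_0)%:MP -> msubst H p = 0 -> p = 0.
  by move=> -> /eqP; rewrite msubstC mpolyC_eq0 => /eqP ->.
(* By the chain rule the images of the partial derivatives of [p] form a row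
   vector killed by [jacobian H]. *)
have deriv_eq0 p : msubst H p = 0 -> forall i, msubst H (p^`M(i)) = 0.
  move=> Hp0; pose v : 'rV[P]_m := \row_i msubst H (p^`M(i)).
  have vJ : v *m jacobian H = 0.
    apply/rowP => j; have := mderiv_msubst H p j; rewrite Hp0 mderiv0 => e.
    by rewrite !mxE [RHS]e; apply: eq_bigr => i _; rewrite !mxE.
  have : \det (jacobian H) *: v = 0.
    by rewrite -mul_mx_scalar -mul_mx_adj mulmxA vJ mul0mx.
  move/eqP; rewrite scalemx_eq0 (negbTE dJ) => /eqP /rowP v0 i.
  by move: (v0 i); rewrite !mxE.
elim=> [|s ih] p hs Hp0; apply: (const_eq0 _ _ Hp0).
  exact: msize1_polyC (leq_trans hs (leq0n 1)).
apply: mderiv_eq0_const => i; apply: ih (deriv_eq0 p Hp0 i).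
by apply: leq_trans (msize_mderiv p i) _; rewrite -ltnS; case: (msize p) hs.
Qed.

End Jacobian.

(** * Linear rational maps *)

Definition mxforms (R : comNzRingType) m (Q : 'M[{mpoly R[m]}]_m) (i : 'I_m) :
    {mpoly R[m]} :=
  \sum_l Q i l * 'X_l.

Lemma msubst_mxforms (R : comNzRingType) m m' (H : 'I_m -> {mpoly R[m']}) Q i :
  msubst H (mxforms Q i) = \sum_l msubst H (Q i l) * H l.
Proof.
by rewrite /mxforms rmorph_sum; apply: eq_bigr => l _; rewrite rmorphM /= msubstX.
Qed.

Section LinearMaps.
Variables (k : fieldType) (m : nat).
Local Notation K := (ratfun k m).
Local Notation P := {mpoly k[m]}.

Definition lmap (Q : 'M[K]_m) : ratmap k m := fun i => \sum_l Q i l * ratX k l.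

Lemma tofrac_msubst m' (H : 'I_m' -> P) (q : {mpoly k[m']}) :
  tofrac (msubst H q) = mmap (ratC m) (@tofrac _ \o H) q.
Proof. by rewrite /msubst rmorph_mmap. Qed.

Lemma peval_msubst m' (H : 'I_m' -> P) h (q : {mpoly k[m']}) :
  peval h (msubst H q) = mmap (ratC m) (peval h \o H) q.
Proof. by rewrite /msubst rmorph_mmap; apply: eq_mmap => // c /=; rewrite pevalC. Qed.

Lemma lmap_tofrac (Q : 'M[P]_m) : lmap (map_mx (@tofrac _) Q) = @tofrac _ \o mxforms Q.
Proof.
apply: functional_extensionality => i; rewrite /lmap /mxforms /= rmorph_sum.
by apply: eq_bigr => l _; rewrite mxE rmorphM.
Qed.

Lemma alg_indep_lmap_tofrac (hk : [pchar k] =i pred0) (Q : 'M[P]_m) :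
  \det (jacobian (mxforms Q)) != 0 -> alg_indep (lmap (map_mx (@tofrac _) Q)).
Proof.
move=> dJ p; rewrite lmap_tofrac -[peval _ _]/(mmap _ _ _) -tofrac_msubst.
by move=> /eqP; rewrite tofrac_eq0 => /eqP; apply: msubst_inj_jacobian dJ p.
Qed.

Lemma jacobian_mxforms (Q : 'M[P]_m) i j :
  (forall l, (Q i l)^`M(j) = 0) -> jacobian (mxforms Q) i j = Q i j.
Proof.
move=> dQ0; rewrite mxE /mxforms raddf_sum (bigD1 j) //= big1 ?addr0 => [|l /negbTE lj];
  by rewrite mderivM dQ0 mul0r add0r mderivXU ?eqxx ?mulr1 ?lj ?mulr0.
Qed.

Lemma alg_indep_lmapC (hk : [pchar k] =i pred0) (C : 'M[k]_m) :
  \det C != 0 -> alg_indep (lmap (map_mx (ratC m) C)).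
Proof.
move=> dC; have -> : map_mx (ratC m) C = map_mx (@tofrac _) (map_mx (@mpolyC m k) C).
  by apply/matrixP => i j; rewrite !mxE.
apply: alg_indep_lmap_tofrac => //.
have -> : jacobian (mxforms (map_mx (@mpolyC m k) C)) = map_mx (@mpolyC m k) C.
  by apply/matrixP => i j; apply: jacobian_mxforms => l; rewrite mxE mderivC.
by rewrite det_map_mx mpolyC_eq0.
Qed.

Lemma lmap1 : lmap 1%:M = @ratX k m.
Proof.
apply: functional_extensionality => i; rewrite /lmap (bigD1 i) //= mxE eqxx mul1r.
by rewrite big1 ?addr0 // => l /negbTE li; rewrite mxE eq_sym li mul0r.
Qed.

Lemma rcomp_lmap (Q R : 'M[K]_m) (RI : alg_indep (lmap R)) :
  rcomp (lmap Q) (lmap R) = lmap (map_mx (rsubst (lmap R)) Q *m R).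
Proof.
apply: functional_extensionality => i.
rewrite /rcomp {1}/lmap -[rsubst _ _]/(rsubstm RI _) rmorph_sum /=.
under eq_bigr do rewrite rmorphM /= [X in _ * X](rsubstX RI) mulr_sumr.
rewrite exchange_big; apply: eq_bigr => r _.
by rewrite mxE mulr_suml; apply: eq_bigr => l _; rewrite mxE mulrA.
Qed.

Lemma map_rsubst_ratC h p q (C : 'M[k]_(p, q)) : alg_indep h ->
  map_mx (rsubst h) (map_mx (ratC m) C) = map_mx (ratC m) C.
Proof. by move=> hI; apply/matrixP => i j; rewrite !mxE rsubstC. Qed.

Lemma rcomp_lmapC (C D : 'M[k]_m) (DI : alg_indep (lmap (map_mx (ratC m) D))) :
  rcomp (lmap (map_mx (ratC m) C)) (lmap (map_mx (ratC m) D)) =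
  lmap (map_mx (ratC m) (C *m D)).
Proof. by rewrite (rcomp_lmap _ DI) map_rsubst_ratC // map_mxM. Qed.

End LinearMaps.

Lemma split_lshift m n (j : 'I_m) : split (lshift n j) = inl j.
Proof. exact: (unsplitK (inl j)). Qed.
Lemma split_rshift m n (j : 'I_n) : split (rshift m j) = inr j.
Proof. exact: (unsplitK (inr j)). Qed.

(* [lin_subst M q] is q(Mx). *)
Definition lin_subst (k : fieldType) n (M : 'M[k]_n) (q : {mpoly k[n]}) : {mpoly k[n]} :=
  msubst (mxforms (map_mx (@mpolyC n k) M)) q.

HB.instance Definition _ (k : fieldType) n (M : 'M[k]_n) :=
  GRing.RMorphism.copy (lin_subst M) (msubst (mxforms (map_mx (@mpolyC n k) M))).

Section Blocks.
Variables (k : fieldType) (n : nat).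
Local Notation N := (n + n)%N.
Local Notation K := (ratfun k N).

Lemma lin_cremona_lmap (M : 'M[k]_n) :
  lin_cremona M = lmap (map_mx (ratC N) (block_mx M 0 0 1%:M)).
Proof.
apply: functional_extensionality => i.
rewrite /lin_cremona /lmap map_block_mx big_split_ord /=.
rewrite -(splitK i); case: (split i) => j; rewrite /= ?split_lshift ?split_rshift.
  rewrite [X in _ + X]big1 ?addr0 => [|l _]; last by rewrite block_mxEur !mxE rmorph0 mul0r.
  by apply: eq_bigr => l _; rewrite block_mxEul mxE.
rewrite big1 ?add0r => [|l _]; last by rewrite block_mxEdl !mxE rmorph0 mul0r.
rewrite (bigD1 j) //= block_mxEdr !mxE eqxx rmorph1 mul1r big1 ?addr0 // => l /negbTE lj.
by rewrite block_mxEdr !mxE eq_sym lj rmorph0 mul0r.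
Qed.

Lemma lin_cremona1 : lin_cremona (1%:M : 'M[k]_n) = @ratX k N.
Proof. by rewrite lin_cremona_lmap -scalar_mx_block map_mx1 lmap1. Qed.

Lemma lmap_block1_lshift (D : 'M[K]_n) (j : 'I_n) :
  lmap (block_mx 1%:M 0 0 D) (lshift n j) = ratX k (lshift n j).
Proof.
rewrite /lmap big_split_ord /= [X in _ + X]big1 ?addr0 => [|l _]; last first.
  by rewrite block_mxEur mxE mul0r.
rewrite (bigD1 j) //= block_mxEul mxE eqxx mul1r big1 ?addr0 // => l /negbTE lj.
by rewrite block_mxEul mxE eq_sym lj mul0r.
Qed.

(* k[x] inside k[x, y], x being the first n variables *)
Definition xembed (q : {mpoly k[n]}) : {mpoly k[N]} := msubst (fun j => 'X_(lshift n j)) q.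

HB.instance Definition _ := GRing.RMorphism.copy xembed (msubst (fun j => 'X_(lshift n j))).

Lemma xembed_eq0 q : (xembed q == 0) = (q == 0).
Proof.
pose G (i : 'I_N) : {mpoly k[n]} := if split i is inl j then 'X_j else 0.
have xembedK : cancel xembed (msubst G).
  move=> p; rewrite /xembed msubst_comp -[RHS]mmap_mpolyC_X; apply: eq_mmap => // j.
  by rewrite /= msubstX /G split_lshift.
apply/eqP/eqP => [xq0|->]; last exact: rmorph0.
by rewrite -[q]xembedK xq0 rmorph0.
Qed.

Lemma mderiv_xembed q (j : 'I_n) : (xembed q)^`M(rshift n j) = 0.
Proof.
rewrite /xembed mderiv_msubst big1 // => i _.
by rewrite mderivXU eq_lrshift mulr0.
Qed.

Lemma rsubst_xembed (h : ratmap k N) (hI : alg_indep h) :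
  (forall j, h (lshift n j) = ratX k (lshift n j)) ->
  forall q, rsubst h (tofrac (xembed q)) = tofrac (xembed q).
Proof.
move=> hx q; rewrite rsubst_tofrac // peval_msubst tofrac_msubst.
by apply: eq_mmap => // j /=; rewrite pevalX hx.
Qed.

Lemma rsubst_lin_cremona_xembed (M : 'M[k]_n) (LI : alg_indep (lin_cremona M)) q :
  rsubst (lin_cremona M) (tofrac (xembed q)) = tofrac (xembed (lin_subst M q)).
Proof.
rewrite rsubst_tofrac // /xembed /lin_subst msubst_comp peval_msubst tofrac_msubst.
apply: eq_mmap => // j /=; rewrite pevalX /lin_cremona split_lshift msubst_mxforms.
by rewrite rmorph_sum; apply: eq_bigr => l _; rewrite rmorphM /= mxE msubstC.
Qed.

End Blocks.

(** * The twist (x, y) |-> (x, A(x) y) *)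

Section Twist.
Variables (k : fieldType) (n : nat) (A : 'M[{mpoly k[n]}]_n).
Local Notation N := (n + n)%N.
Local Notation K := (ratfun k N).
Local Notation AN := (map_mx (@xembed k n) A).
Local Notation AK := (map_mx (@tofrac _) AN).

Definition twist : ratmap k N := lmap (block_mx 1%:M 0 0 AK).
Definition untwist : ratmap k N := lmap (block_mx 1%:M 0 0 (invmx AK)).

Hypothesis (hk : [pchar k] =i pred0) (detA : \det A != 0).

Lemma det_map_xembed : \det AN != 0.
Proof. by rewrite det_map_mx xembed_eq0. Qed.

Lemma unitmx_map_xembed : AK \in unitmx.
Proof. by rewrite unitmxE det_map_mx unitfE tofrac_eq0 det_map_xembed. Qed.

Lemma alg_indep_twist : alg_indep twist.
Proof.
have -> : twist = lmap (map_mx (@tofrac _) (block_mx 1%:M 0 0 AN)).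
  by rewrite /twist map_block_mx map_mx1 !map_mx0.
apply: alg_indep_lmap_tofrac => //; set J := jacobian _.
(* The Jacobian is block lower triangular with diagonal blocks 1 and AN: the
   top rows do not depend on x and no entry depends on y. *)
have dx0 (i j : 'I_n) l : (block_mx 1%:M 0 0 AN (lshift n i) l)^`M(lshift n j) = 0.
  by rewrite -(splitK l); case: (split l) => l' /=;
    rewrite ?block_mxEul ?block_mxEur mxE ?mderivC ?mderiv0 // -mpolyC_nat mderivC.
have dy0 (i : 'I_N) (j : 'I_n) l : (block_mx 1%:M 0 0 AN i l)^`M(rshift n j) = 0.
  rewrite -(splitK i) -(splitK l); case: (split i) => i'; case: (split l) => l' /=;
    rewrite ?block_mxEul ?block_mxEur ?block_mxEdl ?block_mxEdr mxE ?mderiv0 //.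
    by rewrite -mpolyC_nat mderivC.
  exact: mderiv_xembed.
have -> : J = block_mx 1%:M 0 (dlsubmx J) AN.
  rewrite -[J in LHS]submxK; congr block_mx; apply/matrixP => i j;
    rewrite [LHS]mxE [LHS]mxE /J jacobian_mxforms ?block_mxEul ?block_mxEur ?block_mxEdr //;
    by move=> l; first [exact: dx0 | exact: dy0].
by rewrite det_lblock det1 mul1r det_map_xembed.
Qed.

Lemma map_rsubst_xembed (h : ratmap k N) (hI : alg_indep h) :
  (forall j, h (lshift n j) = ratX k (lshift n j)) -> map_mx (rsubst h) AK = AK.
Proof. by move=> hx; apply/matrixP => i j; rewrite !mxE rsubst_xembed. Qed.

Lemma rcomp_lmap_block1 (D E : 'M[K]_n) (EI : alg_indep (lmap (block_mx 1%:M 0 0 E))) :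
  map_mx (rsubst (lmap (block_mx 1%:M 0 0 E))) D = D ->
  rcomp (lmap (block_mx 1%:M 0 0 D)) (lmap (block_mx 1%:M 0 0 E)) =
  lmap (block_mx 1%:M 0 0 (D *m E)).
Proof.
move=> Dfix; rewrite (rcomp_lmap _ EI) -[map_mx _ _]/(map_mx (rsubstm EI) _).
rewrite map_block_mx map_mx1 !map_mx0 [map_mx _ D]Dfix mulmx_block.
by rewrite !(mul1mx, mulmx1, mul0mx, mulmx0, addr0, add0r).
Qed.

Lemma untwist_twist : rcomp untwist twist = @ratX k N.
Proof.
rewrite (rcomp_lmap_block1 alg_indep_twist); last first.
  rewrite -[map_mx _ _]/(map_mx (rsubstm alg_indep_twist) _) map_invmx.
  by rewrite [map_mx _ AK](map_rsubst_xembed alg_indep_twist) //; apply: lmap_block1_lshift.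
by rewrite (mulVmx unitmx_map_xembed) -scalar_mx_block lmap1.
Qed.

Lemma alg_indep_untwist : alg_indep untwist.
Proof. exact: alg_indep_rcomp_id alg_indep_twist untwist_twist. Qed.

Lemma twist_untwist : rcomp twist untwist = @ratX k N.
Proof.
rewrite (rcomp_lmap_block1 alg_indep_untwist); last first.
  by rewrite (map_rsubst_xembed alg_indep_untwist) //; apply: lmap_block1_lshift.
by rewrite (mulmxV unitmx_map_xembed) -scalar_mx_block lmap1.
Qed.

Lemma twist_lin_cremona (M B : 'M[k]_n) :
  map_mx (lin_subst M) A = map_mx (@mpolyC n k) B *m A -> alg_indep (lin_cremona M) ->
  rcomp twist (lin_cremona M) = rcomp (lmap (map_mx (ratC N) (block_mx M 0 0 B))) twist.
Proof.
move=> AM LI; have := LI; rewrite lin_cremona_lmap; set CM := map_mx _ _ => CMI.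
rewrite (rcomp_lmap _ CMI) (rcomp_lmap _ alg_indep_twist).
rewrite (map_rsubst_ratC _ alg_indep_twist) -[map_mx (rsubst _) _]/(map_mx (rsubstm CMI) _).
have -> : map_mx (rsubstm CMI) (block_mx (1%:M : 'M[K]_n) 0 0 AK) =
    block_mx 1%:M 0 0 (map_mx (rsubstm CMI) AK).
  by rewrite map_block_mx map_mx1 !map_mx0.
have -> : map_mx (rsubstm CMI) AK = map_mx (ratC N) B *m AK.
  apply/matrixP => i j; rewrite !mxE /rsubstm /CM -lin_cremona_lmap.
  rewrite rsubst_lin_cremona_xembed //; have /matrixP/(_ i j) := AM; rewrite !mxE => ->.
  rewrite (rmorph_sum (@xembed k n)) rmorph_sum; apply: eq_bigr => l _.
  by rewrite !mxE !rmorphM /= /xembed msubstC.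
rewrite /CM !map_block_mx map_mx1 !map_mx0 !mulmx_block.
by rewrite !(mul1mx, mulmx1, mul0mx, mulmx0, addr0, add0r).
Qed.

Lemma untwist_conj (M B : 'M[k]_n) :
  map_mx (lin_subst M) A = map_mx (@mpolyC n k) B *m A -> alg_indep (lin_cremona M) ->
  rcomp untwist (rcomp (lmap (map_mx (ratC N) (block_mx M 0 0 B))) twist) = lin_cremona M.
Proof.
move=> AM LI; rewrite -(twist_lin_cremona AM LI) -(rcompA _ alg_indep_twist LI).
by rewrite untwist_twist ratX_rcomp.
Qed.

Lemma twist_conj (M B : 'M[k]_n) :
  map_mx (lin_subst M) A = map_mx (@mpolyC n k) B *m A -> alg_indep (lin_cremona M) ->
  rcomp twist (rcomp (lin_cremona M) untwist) = lmap (map_mx (ratC N) (block_mx M 0 0 B)).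
Proof.
move=> AM LI; rewrite -(rcompA _ LI alg_indep_untwist) (twist_lin_cremona AM LI).
by rewrite (rcompA _ alg_indep_twist alg_indep_untwist) twist_untwist rcomp_ratX.
Qed.

End Twist.

(** * An equivariant polynomial matrix *)

Lemma det_neq0_mulmx1 (F : fieldType) n (M M' : 'M[F]_n) : M *m M' = 1%:M -> \det M != 0.
Proof. by case/mulmx1_unit => /[!unitmxE] /[!unitfE]. Qed.

Definition mxapply (R : nzRingType) n (M : 'M[R]_n) (x : 'I_n -> R) : 'I_n -> R :=
  fun j => \sum_l M j l * x l.

Lemma mxapplyB (R : nzRingType) n (M M' : 'M[R]_n) x j :
  mxapply (M - M') x j = mxapply M x j - mxapply M' x j.
Proof. by rewrite /mxapply -sumrB; apply: eq_bigr => l _; rewrite !mxE mulrBl. Qed.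

Lemma mxapply1 (R : nzRingType) n (x : 'I_n -> R) : mxapply 1%:M x = x.
Proof.
apply: functional_extensionality => j; rewrite /mxapply (bigD1 j) //= mxE eqxx mul1r.
by rewrite big1 ?addr0 // => l /negbTE lj; rewrite mxE eq_sym lj mul0r.
Qed.

Section LinSubst.
Variables (k : fieldType) (n : nat).

Lemma meval_lin_subst (M : 'M[k]_n) x q : (lin_subst M q).@[x] = q.@[mxapply M x].
Proof.
rewrite /lin_subst /msubst /meval rmorph_mmap; apply: eq_mmap => [c|j] /=.
  exact: mevalC.
rewrite /mxforms rmorph_sum; apply: eq_bigr => l _.
by rewrite rmorphM /= mxE mmapC mmapX mmap1U.
Qed.

Lemma lin_subst_comp (M M' : 'M[k]_n) q :
  lin_subst M (lin_subst M' q) = lin_subst (M' *m M) q.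
Proof.
rewrite /lin_subst msubst_comp; apply: eq_mmap => // j /=; rewrite msubst_mxforms /mxforms.
under eq_bigr do rewrite mxE msubstC mulr_sumr.
rewrite exchange_big; apply: eq_bigr => r _; rewrite !mxE rmorph_sum mulr_suml.
by apply: eq_bigr => l _; rewrite !mxE rmorphM mulrA.
Qed.

Lemma lin_subst_mpolyC (M : 'M[k]_n) p q (C : 'M[k]_(p, q)) :
  map_mx (lin_subst M) (map_mx (@mpolyC n k) C) = map_mx (@mpolyC n k) C.
Proof. by apply/matrixP => i j; rewrite !mxE /lin_subst msubstC. Qed.

End LinSubst.

(* The point is taken on the moment curve t |-> (t^l)_l, with t avoiding the roots
   of one nonzero polynomial per matrix. *)
Lemma exists_point_off_kernels (k : closedFieldType) n (I : finType) (P : pred I)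
    (M : I -> 'M[k]_n) :
  (forall i, P i -> M i != 0) ->
  exists x, forall i, P i -> exists r, mxapply (M i) x r != 0.
Proof.
move=> M0; have /fin_all_exists [q qP] : forall i, exists q : {poly k}, q != 0 /\
    (P i -> forall t, ~~ root q t -> exists r, mxapply (M i) (fun l => t ^+ l) r != 0).
  move=> i; have [Pi|_] := boolP (P i); last by exists 1; rewrite oner_eq0.
  have /matrix0Pn [r [l Mrl]] := M0 i Pi.
  exists (rVpoly (row r (M i))); split => [|_ t].
    apply: contraNneq Mrl => /(congr1 (@poly_rV _ n)).
    rewrite rVpolyK linear0 => /rowP/(_ l).
    by rewrite !mxE => /eqP.
  rewrite /root horner_poly => nt; exists r; move: nt; congr (~~ (_ == 0)).
  by apply: eq_bigr => j _; rewrite valK mxE.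
have /closed_nonrootP [t nt] : \prod_i q i != 0 by apply/prodf_neq0 => i _; case: (qP i).
exists (fun l => t ^+ l) => i Pi; have [_ /(_ Pi t)] := qP i; apply.
by move: nt; rewrite /root horner_prod => /prodf_neq0 /(_ i isT).
Qed.

Lemma exists_mpoly_indicator (k : fieldType) n (I : finType) (i0 : I) (p : I -> 'I_n -> k) :
  (forall i, i != i0 -> exists r, p i r != p i0 r) ->
  exists c : {mpoly k[n]}, forall i, c.@[p i] = (i == i0)%:R.
Proof.
move=> sep; have /fin_all_exists [l lP] : forall i, exists l : {mpoly k[n]},
    i != i0 -> l.@[p i0] = 1 /\ l.@[p i] = 0.
  move=> i; have [-> | ni] := eqVneq i i0; first by exists 0.
  have [r nr] := sep i ni; exists (('X_r - (p i r)%:MP) * ((p i0 r - p i r)^-1)%:MP) => _.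
  rewrite !rmorphM !rmorphB /= !mevalXU !mevalC subrr mul0r mulfV //.
  by rewrite subr_eq0 eq_sym.
exists (\prod_(i | i != i0) l i) => j; rewrite rmorph_prod.
have [->|nj] := eqVneq j i0; first by rewrite big1 // => i /lP [].
by rewrite (bigD1 j) //= (lP j nj).2 mul0r.
Qed.

Lemma det_repr_neq0 (F : fieldType) (gT : finGroupType) n (a : gT -> 'M[F]_n) :
  (forall x y, a (x * y)%g = a x *m a y) -> a 1%g = 1%:M -> forall g, \det (a g) != 0.
Proof.
by move=> aM a1 g; apply: (@det_neq0_mulmx1 _ _ _ (a g^-1)%g); rewrite -aM mulgV.
Qed.

Section Construction.
Variables (k : closedFieldType) (n : nat) (gT : finGroupType) (a1 a2 : gT -> 'M[k]_n).
Hypotheses (a1M : forall x y, a1 (x * y)%g = a1 x *m a1 y) (a11 : a1 1%g = 1%:M).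
Hypotheses (a1_inj : injective a1) (a2M : forall x y, a2 (x * y)%g = a2 x *m a2 y).
Hypothesis (a21 : a2 1%g = 1%:M).
Local Notation P := {mpoly k[n]}.

Lemma exists_free_point :
  exists x : 'I_n -> k, forall h, h != 1%g -> exists r, mxapply (a1 h) x r != x r.
Proof.
have [|x xP] := @exists_point_off_kernels k n gT (fun h => h != 1%g) (fun h => a1 h - 1%:M).
  by move=> h; apply: contra; rewrite subr_eq0 -a11 => /eqP /a1_inj ->.
exists x => h /xP [r nr]; exists r; rewrite -subr_eq0.
by move: nr; rewrite mxapplyB mxapply1.
Qed.

(* The group average of c(a1(h) x) a2(h)^-1 is equivariant; when c is the
   indicator of a free orbit it is the identity at that orbit's base point. *)
Definition avg_mx (c : P) : 'M[P]_n :=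
  \sum_h lin_subst (a1 h) c *: map_mx (@mpolyC n k) (a2 (h^-1)%g).

Lemma avg_mx_equivariant c g :
  map_mx (lin_subst (a1 g)) (avg_mx c) = map_mx (@mpolyC n k) (a2 g) *m avg_mx c.
Proof.
rewrite /avg_mx map_mx_sum mulmx_sumr [RHS](reindex_inj (mulIg g)) /=.
apply: eq_bigr => h _; rewrite map_mxZ lin_subst_mpolyC -scalemxAr -map_mxM -a2M.
by rewrite /= lin_subst_comp -a1M invMg mulKVg.
Qed.

Lemma det_avg_mx c x : (forall h, c.@[mxapply (a1 h) x] = (h == 1%g)%:R) ->
  \det (avg_mx c) != 0.
Proof.
move=> cx; have avgx : map_mx (meval x) (avg_mx c) = 1%:M.
  rewrite /avg_mx map_mx_sum (bigD1 1%g) //= big1 ?addr0 => [|h nh]; last first.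
    by rewrite map_mxZ /= meval_lin_subst cx (negbTE nh) scale0r.
  rewrite map_mxZ /= meval_lin_subst cx eqxx scale1r invg1 a21.
  by apply/matrixP => i j; rewrite !mxE mevalC.
apply: contra_neq (oner_neq0 k) => d0.
by have := congr1 determinant avgx; rewrite det_map_mx d0 rmorph0 det1.
Qed.

Lemma exists_equivariant_mx : exists A : 'M[P]_n, \det A != 0 /\
  forall g, map_mx (lin_subst (a1 g)) A = map_mx (@mpolyC n k) (a2 g) *m A.
Proof.
have [x xP] := exists_free_point.
have [|c cP] := @exists_mpoly_indicator k n gT 1%g (fun h => mxapply (a1 h) x).
  by move=> h /xP; rewrite a11 mxapply1.
by exists (avg_mx c); split; [apply: det_avg_mx cP | apply: avg_mx_equivariant].
Qed.

End Construction.

(** * Conjugation *)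

Section Swap.
Variables (k : fieldType) (n : nat).
Local Notation N := (n + n)%N.

Definition swap_mx : 'M[k]_N := block_mx 0 1%:M 1%:M 0.
Definition swapxy : ratmap k N := lmap (map_mx (ratC N) swap_mx).

Lemma swap_mxK : swap_mx *m swap_mx = 1%:M.
Proof.
rewrite /swap_mx mulmx_block !(mul1mx, mulmx1, mul0mx, mulmx0, addr0, add0r).
by rewrite -scalar_mx_block.
Qed.

Lemma alg_indep_swapxy (hk : [pchar k] =i pred0) : alg_indep swapxy.
Proof. exact/alg_indep_lmapC/det_neq0_mulmx1/swap_mxK. Qed.

Lemma alg_indep_lin_block (hk : [pchar k] =i pred0) (M D : 'M[k]_n) :
  \det M != 0 -> \det D != 0 -> alg_indep (lmap (map_mx (ratC N) (block_mx M 0 0 D))).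
Proof. by move=> dM dD; apply: alg_indep_lmapC; rewrite // det_lblock mulf_neq0. Qed.

Lemma alg_indep_lin_cremona (hk : [pchar k] =i pred0) (M : 'M[k]_n) :
  \det M != 0 -> alg_indep (lin_cremona M).
Proof.
by move=> dM; rewrite lin_cremona_lmap; apply: alg_indep_lin_block; rewrite ?det1 ?oner_eq0.
Qed.

Lemma swapxy_conj (hk : [pchar k] =i pred0) (M D : 'M[k]_n) :
  \det M != 0 -> \det D != 0 ->
  rcomp swapxy (rcomp (lmap (map_mx (ratC N) (block_mx D 0 0 M))) swapxy) =
  lmap (map_mx (ratC N) (block_mx M 0 0 D)).
Proof.
move=> dM dD; have dS : \det swap_mx != 0 := det_neq0_mulmx1 swap_mxK.
rewrite /swapxy (rcomp_lmapC _ (alg_indep_lmapC hk dS)) rcomp_lmapC; last first.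
  by apply: alg_indep_lmapC; rewrite // det_mulmx det_lblock !mulf_neq0.
rewrite /swap_mx !mulmx_block.
by rewrite !(mul1mx, mulmx1, mul0mx, mulmx0, addr0, add0r).
Qed.

End Swap.

Section Conjugation.
Variables (k : fieldType) (n : nat).
Local Notation N := (n + n)%N.

Definition conj_map (A B : 'M[{mpoly k[n]}]_n) : ratmap k N :=
  rcomp (rcomp (untwist A) (@swapxy k n)) (twist B).

Hypothesis hk : [pchar k] =i pred0.

Lemma alg_indep_conj_map A B : \det A != 0 -> \det B != 0 -> alg_indep (conj_map A B).
Proof.
move=> dA dB; apply: alg_indep_rcomp; last exact: alg_indep_twist.
by apply: alg_indep_rcomp; [apply: alg_indep_untwist | apply: alg_indep_swapxy].
Qed.

Lemma conj_map_lin_cremona (A B : 'M[{mpoly k[n]}]_n) (M1 M2 : 'M[k]_n) :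
  \det A != 0 -> \det B != 0 -> \det M1 != 0 -> \det M2 != 0 ->
  map_mx (lin_subst M1) A = map_mx (@mpolyC n k) M2 *m A ->
  map_mx (lin_subst M2) B = map_mx (@mpolyC n k) M1 *m B ->
  rcomp (conj_map A B) (rcomp (lin_cremona M2) (conj_map B A)) = lin_cremona M1.
Proof.
move=> dA dB dM1 dM2 AM1 BM2.
(* M1 (+) 1 ~ M1 (+) M2 by twisting with A, ~ M2 (+) M1 by swapping, ~ M2 (+) 1
   by twisting with B. *)
have SI : alg_indep (@swapxy k n) := alg_indep_swapxy hk.
have tAI := alg_indep_twist hk dA; have tBI := alg_indep_twist hk dB.
have uBI := alg_indep_untwist hk dB.
have LI M := @alg_indep_lin_cremona k n hk M.
have eA := untwist_conj hk dA AM1 (LI _ dM1).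
have eS := swapxy_conj hk dM1 dM2.
have eB := twist_conj hk dB BM2 (LI _ dM2).
have := rcomp_sandwich SI (alg_indep_lin_block hk dM2 dM1) tAI SI eA eS.
move/(rcomp_sandwich tBI (LI _ dM2) (alg_indep_rcomp SI tAI) uBI)/(_ eB).
move=> <-; congr (rcomp _ (rcomp _ _)); exact: rcompA.
Qed.

End Conjugation.

Theorem proposition3p2 (k : closedFieldType) (hk : [pchar k] =i pred0)
  (gT : finGroupType) (n : nat) (alpha1 alpha2 : gT -> 'M[k]_n)
  (h1mul : forall x y : gT, alpha1 (x * y)%g = alpha1 x *m alpha1 y)
  (h1one : alpha1 1%g = 1%:M)
  (h1inj : injective alpha1)
  (h2mul : forall x y : gT, alpha2 (x * y)%g = alpha2 x *m alpha2 y)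
  (h2one : alpha2 1%g = 1%:M)
  (h2inj : injective alpha2) :
  exists phi psi : ratmap k (n + n),
    birational_inverse phi psi /\
    forall g : gT,
      rcomp_defined (lin_cremona (alpha2 g)) psi /\
      rcomp_defined phi (rcomp (lin_cremona (alpha2 g)) psi) /\
      lin_cremona (alpha1 g) = rcomp phi (rcomp (lin_cremona (alpha2 g)) psi).
Proof.
have [A [dA eqA]] := exists_equivariant_mx h1mul h1one h1inj h2mul h2one.
have [B [dB eqB]] := exists_equivariant_mx h2mul h2one h2inj h1mul h1one.
have [d1 d2] := (det_repr_neq0 h1mul h1one, det_repr_neq0 h2mul h2one).
have conj12 g := conj_map_lin_cremona hk dA dB (d1 g) (d2 g) (eqA g) (eqB g).
have conj21 g := conj_map_lin_cremona hk dB dA (d2 g) (d1 g) (eqB g) (eqA g).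
have phiI := alg_indep_conj_map hk dA dB; have psiI := alg_indep_conj_map hk dB dA.
exists (conj_map A B), (conj_map B A); split.
  split=> [i|i||]; try exact: admissible_alg_indep.
    by have := conj12 1%g; rewrite h1one h2one lin_cremona1 ratX_rcomp.
  by have := conj21 1%g; rewrite h1one h2one lin_cremona1 ratX_rcomp.
move=> g; have L2I := alg_indep_lin_cremona hk (d2 g).
split; first by move=> i; apply: admissible_alg_indep.
split; last by rewrite conj12.
by move=> i; apply/admissible_alg_indep/alg_indep_rcomp.
Qed.
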